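(* Let $U$ and $V$ be ultrafilters on a complete Boolean algebra $\mathbb{B}$. If $U\le_\mathrm{M} V$ then $U\le_\mathrm{JPR} V$.
   Context: For a Boolean algebra $\mathbb{B}$, $B\subseteq\mathbb{B}$ and $x\in\mathbb{B}$, write $B\upharpoonright x=\{b\in B: b\le x\}$. If $A,B$ are antichains, $B$ is a refinement of $A$ if every $b\in B$ is below some $a\in A$. $\mathrm{Part}(\mathbb{B})$ denotes the set of all maximal antichains of $\mathbb{B}$ ordered by refinement. M-ordering: for ultrafilters $U,V$ on complete Boolean algebras $\mathbb{B},\mathbb{C}$, $U\le_\mathrm{M}V$ iff there exist $v\in V$ and a complete homomorphism $h\colon\mathbb{B}\to\mathbb{C}\upharpoonright v$ with $U=h^{-1}[V]$. JPR-ordering: $U\le_\mathrm{JPR}V$ iff there exist a function $g\colon\mathrm{Part}(\mathbb{B})\to\mathrm{Part}(\mathbb{C})$ and, for each $A\in\mathrm{Part}(\mathbb{B})$, a function $f_A\colon g(A)\to A$ such that (1) for every $A\in\mathrm{Part}(\mathbb{B})$ and every $X\subseteq A$: $\bigvee X\in U\iff\bigvee f_A^{-1}[X]\in V$; and (2) whenever $A,B\in\mathrm{Part}(\mathbb{B})$ and $B$ refines $A$, $\bigvee\{a\wedge b: a\in g(A),\ b\in g(B),\ f_B(b)\le f_A(a)\}\in V$. *)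

From HB Require Import structures.
From mathcomp Require Import all_boot all_order.
From Stdlib Require Import ClassicalEpsilon.
Set Implicit Arguments. Unset Strict Implicit. Unset Printing Implicit Defensive.
Import Order.TTheory.
Local Open Scope order_scope.

Section BA.
Context {d : Order.disp_t} {T : ctbDistrLatticeType d}.

Definition is_lub (X : T -> Prop) (s : T) : Prop :=
  (forall x, X x -> x <= s) /\ (forall u, (forall x, X x -> x <= u) -> s <= u).

Definition complete_BA : Prop := forall X : T -> Prop, exists s, is_lub X s.

(* the supremum \/ X (chosen; it is the lub whenever T is complete) *)
Definition sup (X : T -> Prop) : T :=
  epsilon (inhabits (\bot : T)) (is_lub X).

Definition ultrafilter (U : T -> Prop) : Prop :=
  [/\ U \top, ~ U \bot,
      (forall x y, U x -> x <= y -> U y),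
      (forall x y, U x -> U y -> U (x `&` y)) &
      (forall x, U x \/ U (~` x))].

Definition antichain (A : T -> Prop) : Prop :=
  (forall a, A a -> a != \bot) /\
  (forall a b, A a -> A b -> a <> b -> a `&` b = \bot).

Definition maximal_antichain (A : T -> Prop) : Prop :=
  antichain A /\
  (forall A' : T -> Prop, antichain A' -> (forall a, A a -> A' a) ->
     forall a, A' a -> A a).

Definition refines (B A : T -> Prop) : Prop :=
  forall b, B b -> exists2 a, A a & b <= a.

(* h : T -> T|v is a complete homomorphism (T|v has top v, bottom \bot,
   complement x |-> v `&` ~` x, and the same joins as T) *)
Definition complete_hom_into_restr (v : T) (h : T -> T) : Prop :=
  [/\ (forall x, h x <= v),
      h \top = v,
      (forall x, h (~` x) = v `&` ~` (h x)) &
      (forall X : T -> Prop, h (sup X) = sup (fun y => exists2 x, X x & h x = y))].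

Definition leM (U V : T -> Prop) : Prop :=
  exists v h, [/\ V v, complete_hom_into_restr v h &
                  forall x, U x <-> V (h x)].

(* JPR-ordering (both ultrafilters on the same algebra T);
   g : Part(T) -> Part(T) and f A : g(A) -> A are represented by total
   functions with the corresponding range conditions. *)
Definition leJPR (U V : T -> Prop) : Prop :=
  exists (g : (T -> Prop) -> (T -> Prop)) (f : (T -> Prop) -> T -> T),
    [/\ (forall A, maximal_antichain A -> maximal_antichain (g A)),
        (forall A, maximal_antichain A -> forall b, g A b -> A (f A b)),
        (forall A, maximal_antichain A -> forall X : T -> Prop,
           (forall x, X x -> A x) ->
           (U (sup X) <-> V (sup (fun b => g A b /\ X (f A b))))) &
        (forall A B, maximal_antichain A -> maximal_antichain B -> refines B A ->
           V (sup (fun c => exists a b, [/\ g A a, g B b, f B b <= f A a &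
                                            c = a `&` b])))].
End BA.

(* Let h : B -> B|v be a complete homomorphism with v in V and U = h^-1[V].
   Extend h to a map of the whole algebra by
        ext x := h x \/ (~v /\ x),
   which preserves finite meets and the bottom element.  For a maximal
   antichain A put
        g(A) := { ext a : a in A, ext a <> 0 },   f_A(ext a) := a;
   f_A is well defined because ext is injective on the elements of an
   antichain with nonzero image.
   The theorem follows since V contains v. *)
From mathcomp Require Import all_boot all_order.
From Stdlib Require Import ClassicalEpsilon Classical.
Set Implicit Arguments. Unset Strict Implicit.
Import Order.Theory.
Local Open Scope order_scope.

Section BooleanAlgebra.
Variables (d : Order.disp_t) (T : ctbDistrLatticeType d).
Implicit Types (x y z v w : T) (X A : T -> Prop).

Lemma meet_split (a b w x y : T) : a <= ~` w -> b <= ~` w ->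
  (a `|` (w `&` x)) `&` (b `|` (w `&` y)) = (a `&` b) `|` (w `&` (x `&` y)).
Proof.
move=> aw bw.
have aw0 : a `&` w = \bot by apply/eqP; rewrite disj_leC.
have wb0 : w `&` b = \bot by apply/eqP; rewrite meetC disj_leC.
rewrite meetUl !meetUr [a `&` (w `&` y)]meetA aw0 meet0x joinx0.
rewrite -[w `&` x `&` b]meetA [x `&` b]meetC meetA wb0 meet0x join0x.
by rewrite meetACA meetxx.
Qed.

Lemma ultrafilter_sandwich (V : T -> Prop) v y z : ultrafilter V -> V v ->
  y <= z -> z <= y `|` ~` v -> (V y <-> V z).
Proof.
case=> _ _ Vup Vmeet _ Vv yz zy; split=> [Vy|Vz]; first exact: Vup Vy yz.
have : V (z `&` v) by apply: Vmeet.
move/Vup; apply; rewrite (le_trans (leI2 zy (lexx v))) //.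
by rewrite meetUl meetCx joinx0 leIl.
Qed.

Section Complete.
Hypothesis complete : complete_BA (T := T).

Lemma sup_ub X x : X x -> x <= sup X.
Proof.
by case: (epsilon_spec (inhabits \bot) (is_lub X) (complete X)) => ub _; apply: ub.
Qed.

Lemma sup_least X u : (forall x, X x -> x <= u) -> sup X <= u.
Proof.
by case: (epsilon_spec (inhabits \bot) (is_lub X) (complete X)) => _; apply.
Qed.

Lemma sup_pair x y : sup (fun z => z = x \/ z = y) = x `|` y.
Proof.
apply/eqP; rewrite eq_le; apply/andP; split.
  by apply: sup_least => z [->|->]; rewrite ?leUl ?leUr.
by rewrite leUx !sup_ub //; [right|left].
Qed.

Lemma disjoint_sup X c : (forall x, X x -> c `&` x = \bot) -> c `&` sup X = \bot.
Proof.
move=> cX; apply/eqP; rewrite meetC disj_leC; apply: sup_least => x Xx.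
by rewrite -disj_leC meetC cX.
Qed.

(* A maximal antichain has supremum \top: otherwise ~(\/A) could be added. *)
Lemma maximal_antichain_sup A : maximal_antichain A -> sup A = \top.
Proof.
move=> [[nzA disA] maxA]; set s := sup A.
suff cs0 : ~` s = \bot by rewrite -(complK s) cs0 compl0.
apply: NNPP => csnz.
have disj_cs a : A a -> ~` s `&` a = \bot.
  by move=> Aa; apply/eqP; rewrite meetC disj_leC complK sup_ub.
have Acs : A (~` s).
  apply: (maxA (fun x => A x \/ x = ~` s)); [split| by left | by right].
    by move=> a [/nzA //|->]; apply/eqP.
  move=> a b [Aa|->] [Ab|->] ab //; [exact: disA | | exact: disj_cs].
  by rewrite meetC disj_cs.
apply: csnz; have /meet_idPl <- : ~` s <= s by apply: sup_ub.
by rewrite meetCx.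
Qed.

Lemma maximal_antichain_dense A c : maximal_antichain A ->
  (forall a, A a -> c `&` a = \bot) -> c = \bot.
Proof.
by move=> mA cA; rewrite -[c]meetx1 -(maximal_antichain_sup mA); apply: disjoint_sup.
Qed.

Section CompleteHom.
Variables (v : T) (h : T -> T).
Hypothesis hom : complete_hom_into_restr v h.

Lemma hom_le x : h x <= v.
Proof. by case: hom. Qed.

Lemma hom_bot : h \bot = \bot.
Proof. by case: hom => _ h1 hC _; rewrite -{1}compl1 hC h1 meetxC. Qed.

Lemma hom_join x y : h (x `|` y) = h x `|` h y.
Proof.
case: hom => _ _ _ hsup; rewrite -sup_pair hsup; apply/eqP; rewrite eq_le.
apply/andP; split; first by apply: sup_least => z [w [->|->] <-]; rewrite ?leUl ?leUr.
by rewrite leUx !sup_ub //; [exists y; first right | exists x; first left].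
Qed.

(* Meets are preserved by De Morgan, the complement of B|v being v /\ ~_. *)
Lemma hom_meet x y : h (x `&` y) = h x `&` h y.
Proof.
case: hom => _ _ hC _.
rewrite -[x `&` y]complK complI hC hom_join !hC complU !complI !complK.
rewrite meetA [v `&` (_ `|` _)]meetUr meetxC join0x.
have /meet_idPr -> : h x <= v by apply: hom_le.
have hxv : h x `&` ~` v = \bot by apply/eqP; rewrite disj_leC complK hom_le.
by rewrite meetUr hxv join0x.
Qed.

Lemma hom_mono x y : x <= y -> h x <= h y.
Proof. by move/meet_idPl <-; rewrite hom_meet leIr. Qed.

End CompleteHom.
End Complete.

Section ImageAntichain.
Variable p : T -> T.
Hypothesis p_meet : forall x y, p (x `&` y) = p x `&` p y.
Hypothesis p_bot : p \bot = \bot.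

Definition image_part A : T -> Prop :=
  fun b => exists2 a, A a & p a = b /\ b != \bot.

Definition preimage A (b : T) : T :=
  epsilon (inhabits \bot) (fun a => A a /\ p a = b).

Lemma preimageP A b : image_part A b -> A (preimage A b) /\ p (preimage A b) = b.
Proof.
case=> a Aa [pab _].
by apply: (epsilon_spec (inhabits \bot) (fun a => A a /\ p a = b)); exists a.
Qed.

Lemma image_inj A a a' : antichain A -> A a -> A a' ->
  p a = p a' -> p a != \bot -> a = a'.
Proof.
move=> [_ disA] Aa Aa' paa' /eqP panz; apply: NNPP => aa'; apply: panz.
by rewrite -[p a]meetxx {2}paa' -p_meet disA.
Qed.

Lemma preimage_image A a : antichain A -> A a -> p a != \bot ->
  image_part A (p a) /\ preimage A (p a) = a.
Proof.
move=> acA Aa panz; have imA : image_part A (p a) by exists a.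
have [Apre ppre] := preimageP imA.
by split=> //; apply: (image_inj acA) => //; rewrite ppre.
Qed.

Lemma image_antichain A : antichain A -> antichain (image_part A).
Proof.
move=> [_ disA]; split; first by move=> b [a _ []].
move=> _ _ [a1 A1 [<- _]] [a2 A2 [<- _]] ne.
by rewrite -p_meet disA // => a12; apply: ne; rewrite a12.
Qed.

Lemma image_maximal A : maximal_antichain A ->
  (forall c, (forall a, A a -> c `&` p a = \bot) -> c = \bot) ->
  maximal_antichain (image_part A).
Proof.
move=> [acA _] dense; split; first exact: image_antichain.
move=> A' [nzA' disA'] sub c A'c; apply: NNPP => notim.
have/eqP := nzA' c A'c; apply; apply: dense => a Aa.
have [->|panz] := eqVneq (p a) \bot; first exact: meetx0.
apply: disA' => //; first by apply: sub; exists a.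
by move=> cpa; apply: notim; exists a; rewrite // cpa.
Qed.

End ImageAntichain.

Section Extension.
Hypothesis complete : complete_BA (T := T).
Variables (v : T) (h : T -> T).
Hypothesis hom : complete_hom_into_restr v h.

Definition extend_hom x : T := h x `|` (~` v `&` x).

Lemma hom_le_extend x : h x <= extend_hom x.
Proof. exact: leUl. Qed.

Lemma extend_meet x y : extend_hom (x `&` y) = extend_hom x `&` extend_hom y.
Proof.
by rewrite /extend_hom meet_split ?complK ?(hom_le hom) // (hom_meet complete hom).
Qed.

Lemma extend_bot : extend_hom \bot = \bot.
Proof. by rewrite /extend_hom (hom_bot hom) meetx0 joinx0. Qed.

Lemma extend_mono x y : x <= y -> extend_hom x <= extend_hom y.
Proof. by move/meet_idPl <-; rewrite extend_meet leIr. Qed.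

Lemma extend_zero x : extend_hom x = \bot -> h x = \bot.
Proof. by move=> ex0; apply/eqP; rewrite -lex0 -ex0 hom_le_extend. Qed.

(* An element disjoint from all extend_hom a, a in A, is disjoint from v
   (as h(\/A) = v) and from ~v (as ~v /\ a <= extend_hom a). *)
Lemma extend_dense A c : maximal_antichain A ->
  (forall a, A a -> c `&` extend_hom a = \bot) -> c = \bot.
Proof.
move=> mA cA; case: (hom) => _ htop _ hsup.
have below c' a : A a -> c' <= extend_hom a -> c `&` c' = \bot.
  by move=> Aa le; apply/eqP; rewrite -lex0 -(cA a Aa) leI2.
have cv : c `&` v = \bot.
  rewrite -htop -(maximal_antichain_sup complete mA) hsup.
  by apply: (disjoint_sup complete) => _ [a Aa <-]; apply: (below _ a Aa (hom_le_extend a)).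
have cnv : c `&` ~` v = \bot.
  apply: (maximal_antichain_dense complete mA) => a Aa.
  by rewrite -meetA; apply: (below _ a Aa); rewrite leUr.
by rewrite -[c]meetx1 -(joinxC v) meetUr cv cnv joinx0.
Qed.

Lemma extend_image_maximal A : maximal_antichain A ->
  maximal_antichain (image_part extend_hom A).
Proof.
move=> mA; apply: (image_maximal extend_meet extend_bot mA) => c.
exact: extend_dense.
Qed.

(* Condition (1): the members of g(A) indexed by X agree with h(\/X) below v. *)
Lemma extend_sup_bounds A X : maximal_antichain A -> (forall x, X x -> A x) ->
  let Y := fun b => image_part extend_hom A b /\ X (preimage extend_hom A b) in
  h (sup X) <= sup Y /\ sup Y <= h (sup X) `|` ~` v.
Proof.
move=> [acA _] XA Y; split.
  case: (hom) => _ _ _ ->; apply: (sup_least complete) => _ [a Xa <-].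
  have [/extend_zero ->|enz] := eqVneq (extend_hom a) \bot; first exact: le0x.
  have [imA prea] := preimage_image extend_meet extend_bot acA (XA a Xa) enz.
  by apply: le_trans (hom_le_extend a) _; apply: (sup_ub complete); rewrite /Y prea.
apply: (sup_least complete) => b [imA Xpre]; have [_ <-] := preimageP imA.
by apply: leU2; [apply: (hom_mono complete hom); apply: (sup_ub complete) | apply: leIl].
Qed.

(* Condition (2): for B refining A, the joined meets of g(A) and g(B)
   dominate h(\/B) = v. *)
Lemma extend_refine A B : maximal_antichain A -> maximal_antichain B -> refines B A ->
  v <= sup (fun c => exists a b, [/\ image_part extend_hom A a,
            image_part extend_hom B b,
            preimage extend_hom B b <= preimage extend_hom A a & c = a `&` b]).
Proof.
move=> [acA _] mB ref; case: (hom) => _ htop _ hsup.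
rewrite -htop -(maximal_antichain_sup complete mB) hsup.
apply: (sup_least complete) => _ [b Bb <-].
have [/extend_zero ->|ebnz] := eqVneq (extend_hom b) \bot; first exact: le0x.
have [a Aa ba] := ref b Bb.
have eanz : extend_hom a != \bot.
  by apply: contraNneq ebnz => ea0; rewrite -lex0 -ea0 extend_mono.
have [imA prea] := preimage_image extend_meet extend_bot acA Aa eanz.
have [imB preb] := preimage_image extend_meet extend_bot mB.1 Bb ebnz.
apply: le_trans (hom_le_extend b) _; apply: (sup_ub complete).
exists (extend_hom a), (extend_hom b); split; rewrite ?prea ?preb //.
by rewrite meetC; apply/esym/meet_idPl/extend_mono.
Qed.

End Extension.
End BooleanAlgebra.

Theorem mainTheorem1 (d : Order.disp_t) (T : ctbDistrLatticeType d)
  (U V : T -> Prop) :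
  complete_BA (T := T) -> ultrafilter U -> ultrafilter V ->
  leM U V -> leJPR U V.
Proof.
move=> complete _ uV [v [h [Vv hom UhV]]].
exists (image_part (extend_hom v h)), (preimage (extend_hom v h)); split.
- by move=> A mA; apply: extend_image_maximal.
- by move=> A _ b /preimageP [].
- move=> A mA X XA; have [lo hi] := extend_sup_bounds complete hom mA XA.
  by rewrite UhV; apply: ultrafilter_sandwich uV Vv lo hi.
- move=> A B mA mB ref; case: uV => _ _ Vup _ _.
  exact: Vup Vv (extend_refine complete hom mA mB ref).
Qed.
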